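(* Let $\boldsymbol{X}\in\mathcal{S}^{n\times n}$ have pairwise distinct eigenvalues, let $\delta'>0$, and let $\boldsymbol{X}=\boldsymbol{Q}_x\operatorname{Diag}(\boldsymbol{\lambda}(\boldsymbol{X}))\boldsymbol{Q}_x^\top$ with $\boldsymbol{Q}_x\in\mathcal{O}(n,n)$ be a spectral decomposition. Then there exists $\delta''>0$ such that $$\boldsymbol{B}(\boldsymbol{X},\delta'')\subset\boldsymbol{B}\big((\boldsymbol{Q}_x,\boldsymbol{\lambda}(\boldsymbol{X})),\delta'\big).$$
   Context: $\mathcal{S}^{n\times n}$ denotes the real symmetric $n\times n$ matrices, $\mathcal{O}(n,n)$ the real orthogonal $n\times n$ matrices, and $\boldsymbol{\lambda}(\boldsymbol{X})$ the vector of eigenvalues of $\boldsymbol{X}$ in nonincreasing order. Let $\mathbb{R}^n_{\geq}=\{\boldsymbol{x}\in\mathbb{R}^n: x_1\ge\cdots\ge x_n\}$. For $\boldsymbol{Q}\in\mathcal{O}(n,n)$, $\boldsymbol{\lambda}\in\mathbb{R}^n_\geq$ and $\delta>0$, $\boldsymbol{B}((\boldsymbol{Q},\boldsymbol{\lambda}),\delta):=\{\bar{\boldsymbol{Q}}\operatorname{Diag}(\bar{\boldsymbol{\lambda}})\bar{\boldsymbol{Q}}^\top : \|\bar{\boldsymbol{Q}}-\boldsymbol{Q}\|_F\le\delta,\ \|\bar{\boldsymbol{\lambda}}-\boldsymbol{\lambda}\|\le\delta,\ \bar{\boldsymbol{Q}}\in\mathcal{O}(n,n),\ \bar{\boldsymbol{\lambda}}\in\mathbb{R}^n_\geq\}$,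 and $\boldsymbol{B}(\boldsymbol{X},\delta):=\{\bar{\boldsymbol{X}}\in\mathcal{S}^{n\times n}:\|\bar{\boldsymbol{X}}-\boldsymbol{X}\|_F\le\delta\}$. *)

From HB Require Import structures.
From mathcomp Require Import all_boot all_order all_algebra.
From mathcomp Require Import reals.
Set Implicit Arguments. Unset Strict Implicit. Unset Printing Implicit Defensive.
Import Order.TTheory GRing.Theory Num.Theory.
Local Open Scope ring_scope.

Section Defs.
Variable R : realType.

Definition is_symm n (X : 'M[R]_n) : Prop := X^T = X.

Definition is_orth n (Q : 'M[R]_n) : Prop := Q *m Q^T = 1%:M /\ Q^T *m Q = 1%:M.

Definition frob m n (A : 'M[R]_(m, n)) : R :=
  Num.sqrt (\sum_(i < m) \sum_(j < n) A i j ^+ 2).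

Definition vnorm n (v : 'rV[R]_n) : R := Num.sqrt (\sum_(j < n) v 0 j ^+ 2).

Definition nonincr n (v : 'rV[R]_n) : Prop :=
  forall i j : 'I_n, (i <= j)%N -> v 0 j <= v 0 i.

Definition is_eigvals n (X : 'M[R]_n) (lam : 'rV[R]_n) : Prop :=
  nonincr lam /\ char_poly X = \prod_(i < n) ('X - (lam 0 i)%:P).

Definition ballQL n (Q : 'M[R]_n) (lam : 'rV[R]_n) (d : R) : 'M[R]_n -> Prop :=
  fun Y => exists (Qb : 'M[R]_n) (lb : 'rV[R]_n),
    [/\ frob (Qb - Q) <= d, vnorm (lb - lam) <= d, is_orth Qb, nonincr lb
      & Y = Qb *m diag_mx lb *m Qb^T].

Definition ballX n (X : 'M[R]_n) (d : R) : 'M[R]_n -> Prop :=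
  fun Y => is_symm Y /\ frob (Y - X) <= d.

End Defs.

From HB Require Import structures.
From mathcomp Require Import all_boot all_order all_algebra.
From mathcomp Require Import reals.
From mathcomp Require Import boolp classical_sets filter topology normedtype realfun.
From mathcomp Require Import polyrcf.
From mathcomp Require Import lra.
Import Order.TTheory GRing.Theory Num.Theory.
Import numFieldNormedType.Exports.
Local Open Scope classical_set_scope.
Local Open Scope ring_scope.

(* Write q_i for the columns of Q_x.  Near X the characteristic polynomial of Y
   changes sign around every lambda_i, so it has a root mu_i close to lambda_i;
   the mu_i are then simple and ordered like the lambda_i, i.e. mu = lambda(Y).
   By Cayley-Hamilton, w_i = prod_(j <> i) (Y - mu_j) q_i is a mu_i-eigenvector
   of Y; it depends continuously on (Y, mu) and equals c_i q_i at (X, lambda),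
   with c_i = prod_(j <> i) (lambda_i - lambda_j) <> 0.  Normalised, and signed
   like c_i, the w_i are orthonormal (Y is symmetric and the mu_i distinct) and
   tend to the q_i: they are the columns of the sought Qbar. *)

Lemma mulmx_prod_eigenvector {R : comPzRingType} {n} {Y : 'M[R]_n} {v : 'cV_n} {a : R} :
  Y *m v = a *: v -> forall (I : Type) (r : seq I) (P : pred I) (f : I -> R),
  (\prod_(j <- r | P j) (Y - (f j)%:M)) *m v = (\prod_(j <- r | P j) (a - f j)) *: v.
Proof.
move=> Yv I r P f; elim: r => [|j r IHr]; first by rewrite !big_nil mul1mx scale1r.
rewrite !big_cons; case: (P j) => //.
rewrite -mulmxE -mulmxA IHr -scalemxAr mulmxBl Yv mul_scalar_mx -scalerBl.
by rewrite scalerA mulrC.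
Qed.

Lemma char_poly_prod_roots {R : fieldType} {n} {Y : 'M[R]_n} {mu : 'rV_n} :
  (forall i, root (char_poly Y) (mu 0 i)) -> injective (mu 0) ->
  char_poly Y = \prod_i ('X - (mu 0 i)%:P).
Proof.
move=> mu_roots mu_inj.
have := @all_roots_prod_XsubC _ (char_poly Y) [seq mu 0 i | i <- enum 'I_n].
rewrite size_map size_enum_ord size_char_poly => /(_ erefl) ->.
- by rewrite (monicP (char_poly_monic Y)) scale1r big_map big_enum.
- by apply/allP => _ /mapP [i _ ->]; exact: mu_roots.
- by rewrite uniq_rootsE map_inj_uniq ?enum_uniq.
Qed.

Lemma horner_char_poly {R : comNzRingType} {n} (Y : 'M[R]_n) t :
  (char_poly Y).[t] = \det (t%:M - Y).
Proof.
rewrite /char_poly -horner_evalE -det_map_mx; congr (\det _); apply/matrixP => i j.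
by rewrite !mxE /= horner_evalE hornerD hornerN hornerMn hornerX hornerC.
Qed.

(* When the mu_j are the eigenvalues of Y, this is a scalar multiple of the
   spectral projector of Y onto its mu_i-eigenspace. *)
Definition eigenfilter {R : pzRingType} {n} (Y : 'M[R]_n) (mu : 'rV_n) i : 'M_n :=
  \prod_(j | j != i) (Y - (mu 0 j)%:M).

Lemma eigenfilter_eigen {R : comNzRingType} {n} {Y : 'M[R]_n.+1} {mu : 'rV_n.+1} i
    (v : 'cV_n.+1) :
  char_poly Y = \prod_j ('X - (mu 0 j)%:P) ->
  Y *m (eigenfilter Y mu i *m v) = mu 0 i *: (eigenfilter Y mu i *m v).
Proof.
move=> charY.
have annihilate : (Y - (mu 0 i)%:M) *m eigenfilter Y mu i = 0.
  have := Cayley_Hamilton Y; rewrite charY (bigD1 i) //= rmorphM rmorph_prod /=.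
  rewrite rmorphB /= horner_mx_X horner_mx_C mulmxE.
  by under eq_bigr do rewrite rmorphB /= horner_mx_X horner_mx_C.
apply/eqP; rewrite -subr_eq0 -mul_scalar_mx -mulmxBl mulmxA annihilate.
by rewrite mul0mx.
Qed.

Lemma symmetric_eigenvectors_orthogonal {R : fieldType} {n} {Y : 'M[R]_n}
    {u v : 'cV_n} {a b : R} :
  Y^T = Y -> Y *m u = a *: u -> Y *m v = b *: v -> a != b -> u^T *m v = 0.
Proof.
move=> Ysym Yu Yv ab.
have : (a - b) *: (u^T *m v) = 0.
  rewrite scalerBl scalemxAl -linearZ /= -Yu trmx_mul Ysym -mulmxA Yv.
  by rewrite scalemxAr subrr.
by move/eqP; rewrite scaler_eq0 subr_eq0 (negPf ab) => /eqP.
Qed.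

Lemma trmx_mul_entry {R : pzSemiRingType} {m n p} (A : 'M[R]_(m, n)) (B : 'M[R]_(m, p))
    i j :
  (A^T *m B) i j = ((col i A)^T *m col j B) 0 0.
Proof. by rewrite !mxE; apply: eq_bigr => k _; rewrite !mxE. Qed.

Lemma col_mulmx {R : pzSemiRingType} {m n p} (A : 'M[R]_(m, n)) (B : 'M[R]_(n, p)) i :
  col i (A *m B) = A *m col i B.
Proof. by rewrite !colE mulmxA. Qed.

Lemma mulmx_diag_colP {R : comPzSemiRingType} {n} (Y M : 'M[R]_n) (d : 'rV_n) :
  Y *m M = M *m diag_mx d <-> forall i, Y *m col i M = d 0 i *: col i M.
Proof.
split=> [YM i|Ycol].
  by rewrite -col_mulmx YM mul_mx_diag; apply/colP => k; rewrite !mxE mulrC.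
apply/matrixP => k i; rewrite mul_mx_diag mxE.
by have := congr1 (fun v : 'cV[R]_n => v k 0) (Ycol i); rewrite -col_mulmx !mxE mulrC.
Qed.

Lemma exists_separation {R : realDomainType} {I : finType} (x : I -> R) :
  (forall i j, i != j -> x i != x j) ->
  exists2 g : R, 0 < g & forall i j, i != j -> g <= `|x i - x j|.
Proof.
move=> x_inj.
exists (\big[Order.min/1]_(ij : I * I | ij.1 != ij.2) `|x ij.1 - x ij.2|).
  apply: (big_ind (fun y : R => 0 < y)) => // [y z y_gt0 z_gt0|ij ij_neq].
    by rewrite lt_min y_gt0 z_gt0.
  by rewrite normr_gt0 subr_eq0 x_inj.
move=> i j ij.
exact: (@bigmin_le_cond _ _ _ 1 (i, j) (fun ij : I * I => ij.1 != ij.2)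
  (fun ij => `|x ij.1 - x ij.2|) ij).
Qed.

Lemma prod_XsubC_sign_change {R : realDomainType} {n} (lam : 'rV[R]_n) i eta :
  0 < eta -> (forall j, j != i -> eta < `|lam 0 i - lam 0 j|) ->
  (\prod_j ('X - (lam 0 j)%:P)).[lam 0 i - eta] *
    (\prod_j ('X - (lam 0 j)%:P)).[lam 0 i + eta] < 0.
Proof.
move=> eta_gt0 sep; rewrite !horner_prod -big_split /= (bigD1 i) //= !hornerXsubC.
rewrite pmulr_llt0; first nra.
apply: prodr_gt0 => j ji; have := sep j ji; rewrite !hornerXsubC.
by case: (lerP 0 (lam 0 i - lam 0 j)) => ?;
  [rewrite ger0_norm | rewrite ltr0_norm]; nra.
Qed.

Section Frobenius.
Context {R : realType}.

Lemma frob_sqr {m n} (A : 'M[R]_(m, n)) : frob A ^+ 2 = \sum_i \sum_j A i j ^+ 2.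
Proof.
by rewrite sqr_sqrtr // sumr_ge0 // => i _; rewrite sumr_ge0 // => j _; rewrite sqr_ge0.
Qed.

Lemma frob0 {m n} : frob (0 : 'M[R]_(m, n)) = 0.
Proof.
by rewrite /frob big1 ?sqrtr0 // => i _; rewrite big1 // => j _; rewrite mxE expr0n.
Qed.

Lemma frobZ {m n} a (A : 'M[R]_(m, n)) : frob (a *: A) = `|a| * frob A.
Proof.
rewrite /frob -sqrtr_sqr -sqrtrM ?sqr_ge0 // mulr_sumr; congr Num.sqrt.
by apply: eq_bigr => i _; rewrite mulr_sumr; apply: eq_bigr => j _; rewrite mxE exprMn.
Qed.

Lemma frob_entry {m n} (A : 'M[R]_(m, n)) i j : `|A i j| <= frob A.
Proof.
rewrite /frob -(sqrtr_sqr (A i j)) ler_wsqrtr // (bigD1 i) //= (bigD1 j) //=.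
rewrite -addrA lerDl addr_ge0 ?sumr_ge0 // => [k _|k _].
  exact: sqr_ge0.
by rewrite sumr_ge0 // => l _; exact: sqr_ge0.
Qed.

Lemma vnorm_frob {n} (v : 'rV[R]_n) : vnorm v = frob v.
Proof. by rewrite /vnorm /frob big_ord1. Qed.

Lemma trmx_mul_self {n} (v : 'cV[R]_n) : (v^T *m v) 0 0 = frob v ^+ 2.
Proof.
rewrite frob_sqr mxE; apply: eq_bigr => k _.
by rewrite big_ord1 mxE expr2.
Qed.

Lemma frob_col_orthogonal {n} {Q : 'M[R]_n} i : Q^T *m Q = 1%:M -> frob (col i Q) = 1.
Proof.
move=> QTQ; apply/eqP; rewrite -sqrp_eq1 ?sqrtr_ge0 //.
by rewrite -trmx_mul_self -trmx_mul_entry QTQ mxE eqxx.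
Qed.

End Frobenius.

Section Eigenframe.
Context {R : realType} {n : nat} (Qx : 'M[R]_n.+1) (lam : 'rV[R]_n.+1).
Implicit Types (Y : 'M[R]_n.+1) (mu : 'rV[R]_n.+1).

Definition lagrange_coef i := \prod_(j | j != i) (lam 0 i - lam 0 j).

Definition filtered_col Y mu i : 'cV_n.+1 := eigenfilter Y mu i *m col i Qx.

(* The sign makes the limit at the unperturbed point equal to [col i Qx],
   not its opposite. *)
Definition unit_eigvec Y mu i : 'cV_n.+1 :=
  ((-1) ^+ (lagrange_coef i < 0)%R / frob (filtered_col Y mu i)) *:
    filtered_col Y mu i.

Definition eigframe Y mu : 'M[R]_n.+1 := \matrix_(k, i) unit_eigvec Y mu i k 0.

Lemma col_eigframe Y mu i : col i (eigframe Y mu) = unit_eigvec Y mu i.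
Proof. by apply/colP => k; rewrite !mxE. Qed.

Lemma frob_unit_eigvec Y mu i :
  frob (filtered_col Y mu i) != 0 -> frob (unit_eigvec Y mu i) = 1.
Proof.
move=> nz; rewrite frobZ normrM normr_sign mul1r normfV.
by rewrite ger0_norm ?sqrtr_ge0 // mulVf.
Qed.

Lemma unit_eigvec_eigen {Y mu} i :
  char_poly Y = \prod_j ('X - (mu 0 j)%:P) ->
  Y *m unit_eigvec Y mu i = mu 0 i *: unit_eigvec Y mu i.
Proof.
by move=> charY; rewrite -scalemxAr eigenfilter_eigen // !scalerA mulrC.
Qed.

Lemma eigframe_eigen {Y mu} :
  char_poly Y = \prod_j ('X - (mu 0 j)%:P) ->
  Y *m eigframe Y mu = eigframe Y mu *m diag_mx mu.
Proof.
by move=> charY; apply/mulmx_diag_colP => i; rewrite col_eigframe unit_eigvec_eigen.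
Qed.

Lemma eigframe_orthonormal {Y mu} :
  Y^T = Y -> char_poly Y = \prod_j ('X - (mu 0 j)%:P) -> injective (mu 0) ->
  (forall i, frob (filtered_col Y mu i) != 0) ->
  (eigframe Y mu)^T *m eigframe Y mu = 1%:M.
Proof.
move=> Ysym charY mu_inj nz; apply/matrixP => i j.
rewrite trmx_mul_entry !col_eigframe [RHS]mxE.
have [<-|ij] := eqVneq i j; first by rewrite trmx_mul_self frob_unit_eigvec ?expr1n.
by rewrite (symmetric_eigenvectors_orthogonal Ysym (unit_eigvec_eigen i charY)
  (unit_eigvec_eigen j charY)) ?mxE ?(inj_eq mu_inj).
Qed.

End Eigenframe.

Section EntrywiseLimits.
Context {R : realType} {T : Type} {F : set_system T} {FF : Filter F}.

Lemma cvg_sum {I : Type} (r : seq I) (P : pred I) {f : I -> T -> R} {a : I -> R} :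
  (forall i, f i x @[x --> F] --> a i) ->
  \sum_(i <- r | P i) f i x @[x --> F] --> \sum_(i <- r | P i) a i.
Proof. by move=> fa; exact: (cvg_big add_continuous FF (fun i _ => fa i)). Qed.

Lemma cvg_prod {I : Type} (r : seq I) (P : pred I) {f : I -> T -> R} {a : I -> R} :
  (forall i, f i x @[x --> F] --> a i) ->
  \prod_(i <- r | P i) f i x @[x --> F] --> \prod_(i <- r | P i) a i.
Proof. by move=> fa; exact: (cvg_big mul_continuous FF (fun i _ => fa i)). Qed.

Definition mx_cvg {m k} (A : T -> 'M[R]_(m, k)) (A0 : 'M[R]_(m, k)) :=
  forall i j, A x i j @[x --> F] --> A0 i j.

Lemma mx_cvg_cst {m k} (A0 : 'M[R]_(m, k)) : mx_cvg (fun=> A0) A0.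
Proof. by move=> i j; exact: cvg_cst. Qed.

Lemma mx_cvgB {m k} {A B : T -> 'M[R]_(m, k)} {A0 B0} :
  mx_cvg A A0 -> mx_cvg B B0 -> mx_cvg (fun x => A x - B x) (A0 - B0).
Proof.
by move=> AA0 BB0 i j; rewrite !mxE; under eq_cvg do rewrite !mxE; exact: cvgB.
Qed.

Lemma mx_cvgZ {m k} {c : T -> R} {c0 : R} {A : T -> 'M[R]_(m, k)} {A0} :
  c x @[x --> F] --> c0 -> mx_cvg A A0 -> mx_cvg (fun x => c x *: A x) (c0 *: A0).
Proof.
by move=> cc0 AA0 i j; rewrite mxE; under eq_cvg do rewrite mxE; exact: cvgM.
Qed.

Lemma mx_cvgM {m k l} {A : T -> 'M[R]_(m, k)} {B : T -> 'M[R]_(k, l)} {A0 B0} :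
  mx_cvg A A0 -> mx_cvg B B0 -> mx_cvg (fun x => A x *m B x) (A0 *m B0).
Proof.
move=> AA0 BB0 i j; rewrite mxE; under eq_cvg do rewrite mxE.
by apply: cvg_sum => l'; exact: cvgM.
Qed.

Lemma mx_cvg_scalar {m} {c : T -> R} {c0 : R} :
  c x @[x --> F] --> c0 -> mx_cvg (fun x => (c x)%:M : 'M[R]_m) c0%:M.
Proof.
by move=> cc0 i j; rewrite mxE; under eq_cvg do rewrite mxE; exact: (cvgMn cc0).
Qed.

Lemma mx_cvg_prod {m} {I : Type} (r : seq I) (P : pred I)
    {f : I -> T -> 'M[R]_m.+1} {a} :
  (forall i, mx_cvg (f i) (a i)) ->
  mx_cvg (fun x => \prod_(i <- r | P i) f i x) (\prod_(i <- r | P i) a i).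
Proof.
move=> fa; elim: r => [|i r IHr].
  rewrite big_nil; under [X in mx_cvg X _]funext do rewrite big_nil.
  exact: mx_cvg_cst.
rewrite big_cons; under [X in mx_cvg X _]funext do rewrite big_cons.
by case: (P i) => //; exact: mx_cvgM.
Qed.

Lemma cvg_det {m} {A : T -> 'M[R]_m} {A0} :
  mx_cvg A A0 -> \det (A x) @[x --> F] --> \det A0.
Proof.
move=> AA0; apply: cvg_sum => s; apply: cvgM; first exact: cvg_cst.
by apply: cvg_prod => i; exact: AA0.
Qed.

Lemma cvg_frob {m k} {A : T -> 'M[R]_(m, k)} {A0} :
  mx_cvg A A0 -> frob (A x) @[x --> F] --> frob A0.
Proof.
move=> AA0; apply: (continuous_cvg _ (@sqrt_continuous R _)).
by apply: cvg_sum => i; apply: cvg_sum => j; under eq_cvg do rewrite expr2; exact: cvgM.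
Qed.

Lemma cvg_frob_sub {m k} {A : T -> 'M[R]_(m, k)} {A0} :
  mx_cvg A A0 -> frob (A x - A0) @[x --> F] --> 0.
Proof.
move=> AA0; rewrite -(frob0 (m:=m) (n:=k)) -(subrr A0).
exact: cvg_frob (mx_cvgB AA0 (mx_cvg_cst A0)).
Qed.

End EntrywiseLimits.
Arguments mx_cvg {R T} F {m k}.

Section MatrixNeighbourhoods.
Context {R : realType}.

Lemma mx_cvg_id {m k} (A : 'M[R]_(m, k)) : mx_cvg (nbhs A) id A.
Proof. by move=> i j; exact: coord_continuous. Qed.

Lemma mx_cvg_fst {m k m' k'} (A : 'M[R]_(m, k)) (B : 'M[R]_(m', k')) :
  mx_cvg (nbhs (A, B)) fst A.
Proof.
move=> i j; apply: (continuous_cvg _ (@coord_continuous _ _ _ i j _)).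
exact: cvg_fst.
Qed.

Lemma mx_cvg_snd {m k m' k'} (A : 'M[R]_(m, k)) (B : 'M[R]_(m', k')) :
  mx_cvg (nbhs (A, B)) snd B.
Proof.
move=> i j; apply: (continuous_cvg _ (@coord_continuous _ _ _ i j _)).
exact: cvg_snd.
Qed.

Lemma near_frob_ball {m k} {A : 'M[R]_(m, k)} {P : 'M[R]_(m, k) -> Prop} :
  (\forall B \near A, P B) -> exists2 d : R, 0 < d & forall B, frob (B - A) <= d -> P B.
Proof.
move=> /nbhs_ballP [e /= e_gt0 Pe]; exists (e / 2) => [|B BA]; first exact: divr_gt0.
apply: Pe; split=> // i j; have := frob_entry (B - A) i j.
by rewrite !mxE distrC /ball /=; lra.
Qed.

Lemma near_pair_entrywise {m k m' k'} {A : 'M[R]_(m, k)} {B : 'M[R]_(m', k')}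
    {P : 'M[R]_(m, k) * 'M[R]_(m', k') -> Prop} :
  (\forall p \near (A, B), P p) ->
  exists2 e : R, 0 < e & \forall A' \near A,
    forall B' : 'M[R]_(m', k'), (forall i j, `|B i j - B' i j| < e) -> P (A', B').
Proof.
move=> /nbhs_ballP [e e_gt0 Pe]; exists e => //.
by apply/nbhs_ballP; exists e => // A' AA' B' BB'; apply: Pe; split=> //; split.
Qed.

End MatrixNeighbourhoods.

Section EigenframeLimit.
Context {R : realType} {n : nat} {X Qx : 'M[R]_n.+1} {lam : 'rV[R]_n.+1}.
Hypothesis QxTQx : Qx^T *m Qx = 1%:M.
Hypothesis defX : X = Qx *m diag_mx lam *m Qx^T.
Hypothesis lam_inj : forall i j, i != j -> lam 0 i != lam 0 j.

Lemma lagrange_coef_neq0 i : lagrange_coef lam i != 0.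
Proof. by apply/prodf_neq0 => j ji; rewrite subr_eq0 lam_inj // eq_sym. Qed.

Lemma filtered_col_center i :
  filtered_col Qx X lam i = lagrange_coef lam i *: col i Qx.
Proof.
have XQx : X *m Qx = Qx *m diag_mx lam by rewrite defX -!mulmxA QxTQx mulmx1.
have Qx_col := iffLR (mulmx_diag_colP _ _ _) XQx i.
by rewrite /filtered_col /eigenfilter (mulmx_prod_eigenvector Qx_col).
Qed.

Lemma cvg_filtered_col i :
  mx_cvg (nbhs (X, lam)) (fun p => filtered_col Qx p.1 p.2 i)
    (lagrange_coef lam i *: col i Qx).
Proof.
rewrite -filtered_col_center; apply: mx_cvgM; last exact: mx_cvg_cst.
apply: mx_cvg_prod => j.
apply: mx_cvgB; first exact: mx_cvg_fst.
by apply: mx_cvg_scalar; exact: mx_cvg_snd.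
Qed.

Lemma cvg_frob_filtered_col i :
  frob (filtered_col Qx p.1 p.2 i) @[p --> nbhs (X, lam)] --> `|lagrange_coef lam i|.
Proof.
rewrite -[X in _ --> X]mulr1 -(frob_col_orthogonal i QxTQx) -frobZ.
by apply: cvg_frob; exact: cvg_filtered_col.
Qed.

Lemma cvg_unit_eigvec i :
  mx_cvg (nbhs (X, lam)) (fun p => unit_eigvec Qx lam p.1 p.2 i) (col i Qx).
Proof.
set c := lagrange_coef lam i.
have -> : col i Qx = ((-1) ^+ (c < 0)%R / `|c|) *: (c *: col i Qx).
  by rewrite scalerA mulrAC -normrEsign mulfV ?normr_eq0 ?lagrange_coef_neq0 ?scale1r.
apply: mx_cvgZ; last exact: cvg_filtered_col.
apply: cvgM; first exact: cvg_cst.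
by apply: cvgV; [rewrite normr_eq0 lagrange_coef_neq0 | exact: cvg_frob_filtered_col].
Qed.

Lemma cvg_eigframe : mx_cvg (nbhs (X, lam)) (fun p => eigframe Qx lam p.1 p.2) Qx.
Proof.
move=> k i; have -> : Qx k i = col i Qx k 0 by rewrite mxE.
by under eq_cvg do rewrite mxE; exact: cvg_unit_eigvec.
Qed.

Lemma near_eigframe {d : R} : 0 < d ->
  \forall p \near (X, lam), [/\ forall i, frob (filtered_col Qx p.1 p.2 i) != 0,
    frob (eigframe Qx lam p.1 p.2 - Qx) < d & vnorm (p.2 - lam) < d].
Proof.
move=> d_gt0; near=> p; split.
- near: p; apply: filter_forall => i.
  have c_gt0 : 0 < `|lagrange_coef lam i| by rewrite normr_gt0 lagrange_coef_neq0.
  by apply: filterS (cvgr_gt _ (cvg_frob_filtered_col i) _ c_gt0) => p /lt0r_neq0.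
- by near: p; apply: (cvgr_lt 0) d_gt0; exact: cvg_frob_sub cvg_eigframe.
- rewrite vnorm_frob; near: p; apply: (cvgr_lt 0) d_gt0.
  exact: cvg_frob_sub (mx_cvg_snd X lam).
Unshelve. all: by end_near.
Qed.

End EigenframeLimit.

Section EigenvalueLocalisation.
Context {R : realType} {n : nat}.

Lemma cvg_horner_char_poly (X : 'M[R]_n) t :
  (char_poly Y).[t] @[Y --> X] --> (char_poly X).[t].
Proof.
rewrite horner_char_poly; under eq_cvg do rewrite horner_char_poly.
exact: cvg_det (mx_cvgB (mx_cvg_cst _) (mx_cvg_id X)).
Qed.

Lemma near_char_poly_sign_change {X : 'M[R]_n} {lam : 'rV[R]_n} {eta : R} :
  char_poly X = \prod_i ('X - (lam 0 i)%:P) -> 0 < eta ->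
  (forall i j, i != j -> eta < `|lam 0 i - lam 0 j|) ->
  \forall Y \near X, forall i,
    (char_poly Y).[lam 0 i - eta] * (char_poly Y).[lam 0 i + eta] < 0.
Proof.
move=> charX eta_gt0 sep; apply: (@filter_forall _ _ _ (nbhs X)) => i.
apply: (cvgr_lt _ (cvgM (cvg_horner_char_poly X _) (cvg_horner_char_poly X _))).
by rewrite charX; apply: prod_XsubC_sign_change => // j ji; rewrite sep // eq_sym.
Qed.

Lemma near_char_poly_roots {X : 'M[R]_n} {lam : 'rV[R]_n} {eta : R} :
  char_poly X = \prod_i ('X - (lam 0 i)%:P) -> 0 < eta ->
  (forall i j, i != j -> eta < `|lam 0 i - lam 0 j|) ->
  \forall Y \near X, exists mu : 'rV[R]_n,
    forall i, root (char_poly Y) (mu 0 i) /\ `|lam 0 i - mu 0 i| <= eta.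
Proof.
move=> charX eta_gt0 sep.
have := near_char_poly_sign_change charX eta_gt0 sep; apply: filterS => Y sign_change.
have root_near i : exists x, root (char_poly Y) x /\ `|lam 0 i - x| <= eta.
  have [|x] := polyrcf.poly_ivt _ (ltW (sign_change i)); first lra.
  rewrite in_itv /= => /andP [x_ge x_le] root_x; exists x; split=> //.
  by rewrite ler_norml; apply/andP; split; lra.
have [f fP] := fin_all_exists root_near.
by exists (\row_i f i) => i; rewrite mxE.
Qed.

Lemma decreasing_perturbation {lam mu : 'rV[R]_n} {eta : R} :
  nonincr lam -> (forall i j, i != j -> 2 * eta < `|lam 0 i - lam 0 j|) ->
  (forall i, `|lam 0 i - mu 0 i| <= eta) ->
  forall i j : 'I_n, (i < j)%N -> mu 0 j < mu 0 i.
Proof.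
move=> lam_nonincr sep close i j ij.
have lam_ji : lam 0 j <= lam 0 i := lam_nonincr i j (ltnW ij).
have := sep i j; rewrite neq_ltn ij ger0_norm ?subr_ge0 // => /(_ isT) gap.
by have := close i; have := close j; rewrite !ler_norml => /andP [? ?] /andP [? ?]; lra.
Qed.

Lemma near_eigvals {X : 'M[R]_n} {lam : 'rV[R]_n} {e : R} :
  char_poly X = \prod_i ('X - (lam 0 i)%:P) -> nonincr lam ->
  (forall i j, i != j -> lam 0 i != lam 0 j) -> 0 < e ->
  \forall Y \near X, exists mu : 'rV[R]_n,
    [/\ forall i, root (char_poly Y) (mu 0 i), nonincr mu, injective (mu 0)
      & forall i, `|lam 0 i - mu 0 i| < e].
Proof.
move=> charX lam_nonincr lam_inj e_gt0.
have [g g_gt0 lam_sep] := exists_separation (lam 0) lam_inj.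
pose eta := Num.min (e / 2) (g / 3).
have eta_gt0 : 0 < eta by rewrite lt_min !divr_gt0.
have [eta_e eta_g] : eta <= e / 2 /\ eta <= g / 3 by split; rewrite ge_min lexx ?orbT.
have sep2 i j : i != j -> 2 * eta < `|lam 0 i - lam 0 j|.
  by move=> /lam_sep; lra.
have sep1 i j : i != j -> eta < `|lam 0 i - lam 0 j|.
  by move=> /sep2; lra.
have := near_char_poly_roots charX eta_gt0 sep1; apply: filterS => Y [mu mu_roots].
have mu_decr := decreasing_perturbation lam_nonincr sep2 (fun i => (mu_roots i).2).
exists mu; split.
- by move=> i; case: (mu_roots i).
- move=> i j; rewrite leq_eqVlt => /orP [/eqP/val_inj -> //|/mu_decr/ltW //].
- move=> i j mu_ij; apply/eqP; apply: contraT; rewrite neq_ltn.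
  by case/orP => /mu_decr; rewrite mu_ij ltxx.
- by move=> i; have [_ close] := mu_roots i; lra.
Qed.

End EigenvalueLocalisation.

Theorem lemma3 (R : realType) (n : nat) (X : 'M[R]_n) (lam : 'rV[R]_n)
  (Qx : 'M[R]_n) (d' : R) :
  is_symm X ->
  is_eigvals X lam ->
  (forall i j : 'I_n, i != j -> lam 0 i != lam 0 j) ->
  0 < d' ->
  is_orth Qx ->
  X = Qx *m diag_mx lam *m Qx^T ->
  exists d'' : R, 0 < d'' /\
    (forall Y : 'M[R]_n, ballX X d'' Y -> ballQL Qx lam d' Y).
Proof.
case: n X lam Qx => [|n] X lam Qx _ [lam_nonincr charX] lam_inj d'_gt0 Qx_orth defX.
  exists 1; split=> // Y _; exists Qx, lam; split=> //.
  - by rewrite subrr frob0 ltW.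
  - by rewrite subrr vnorm_frob frob0 ltW.
  - by apply/matrixP => -[].
have [e e_gt0 frameP] :=
  near_pair_entrywise (near_eigframe Qx_orth.2 defX lam_inj d'_gt0).
have [d d_gt0 nearP] :=
  near_frob_ball (filterI frameP (near_eigvals charX lam_nonincr lam_inj e_gt0)).
exists d; split=> // Y [Ysym /nearP [frameY [mu [mu_roots mu_nonincr mu_inj mu_near]]]].
have mu_near_entry i j : `|lam i j - mu i j| < e by rewrite [i]ord1.
have [frame_nz frame_near mu_close] := frameY mu mu_near_entry.
have charY := char_poly_prod_roots mu_roots mu_inj.
have frameTframe := eigframe_orthonormal Qx lam Ysym charY mu_inj frame_nz.
exists (eigframe Qx lam Y mu), mu; split=> //.
- exact: ltW.
- exact: ltW.
- by split=> //; exact: mulmx1C.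
- by rewrite -(eigframe_eigen Qx lam charY) -mulmxA (mulmx1C frameTframe) mulmx1.
Qed.
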